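(* Let $X$ be a second countable locally compact Abelian group and let $K$ be a compact subgroup of $X$. Let $\xi_1,\xi_2,\xi_3$ be independent identically distributed random variables with values in $X$ and distribution $m_K$. Let $\alpha$ be a random variable with a Bernoulli distribution taking the values $0$ and $1$ with probability $\frac12$ each, independent of $(\xi_1,\xi_2,\xi_3)$. Then the following are equivalent: (i) the linear forms $2\xi_1$ and $\xi_1+\xi_2+2\alpha\xi_3$ are identically distributed; (ii) $K$ is a Corwin group.
   Context: $m_K$ denotes the Haar probability distribution on the compact subgroup $K$. A group $K$ is a Corwin group if $\{2x:x\in K\}=K$. *)

From HB Require Import structures.
From mathcomp Require Import all_boot all_order all_algebra.
From mathcomp Require Import all_classical all_reals all_analysis.

Set Implicit Arguments.
Unset Strict Implicit.
Unset Printing Implicit Defensive.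

Import Order.TTheory GRing.Theory Num.Theory.
Local Open Scope classical_set_scope.
Local Open Scope ring_scope.

Definition borel (X : topologicalType) : set (set X) := <<s @open X >>.

Definition second_countable_LCA (X : topologicalZmodType) : Prop :=
  [/\ hausdorff_space X, locally_compact [set: X] & @second_countable X].

Definition is_subgroup (X : zmodType) (K : set X) : Prop :=
  K 0 /\ (forall x y, K x -> K y -> K (x - y)).

Definition corwin (X : zmodType) (K : set X) : Prop :=
  [set x *+ 2 | x in K] = K.

Section rv.
Context {d : measure_display} {T : measurableType d} {R : realType}.
Variable P : probability T R.

Definition X_rv (X : topologicalType) (f : T -> X) : Prop :=
  forall B, borel B -> measurable (f @^-1` B).

Definition law (X : Type) (f : T -> X) : set X -> \bar R :=
  fun B => P (f @^-1` B).

Definition ident_distr (X : topologicalType) (f g : T -> X) : Prop :=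
  forall B, borel B -> law f B = law g B.

End rv.

(** mu is the Haar probability distribution m_K of the compact subgroup K,
    viewed as a distribution on the Borel sets of X: it is concentrated on K
    (mu K = 1) and invariant under translations by elements of K. *)
Definition haar_prob_of (R : realType) (X : topologicalZmodType) (K : set X)
    (mu : set X -> \bar R) : Prop :=
  mu K = 1%E /\
  (forall x B, K x -> borel B -> mu [set x + y | y in B] = mu B).

From HB Require Import structures.
From mathcomp Require Import all_boot all_order all_algebra.
From mathcomp Require Import all_classical all_reals all_analysis.
From mathcomp Require Import finmap.

(* If K is a Corwin group, then 2 xi1 is again m_K-distributed: translating it by
   x = 2y amounts to translating xi1 by y. Adding an independent summand that lies in
   K almost surely does not change a K-invariant law, because the image of m1 x m2
   under addition is m1(X) m2 when m1 is carried by K and m2 is K-invariant. Applied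
   twice, this gives that xi1 + xi2 + 2 alpha xi3 has law m_K. Applied once more, it
   shows that two independent m_K-distributed variables have the same law, since
   both have the law of their sum.
   Conversely, suppose k is in K but not in the compact set 2K. Choose an open
   V containing 0 such that V + V + k misses 2K. The event
   {xi1 in V, xi2 in k + V, xi3 in K} has positive probability, because finitely
   many translates of V cover K. On this event xi1 + xi2 + 2 alpha xi3 lies outside
   2K, yet 2K carries the law of 2 xi1. *)

Set Implicit Arguments.
Unset Printing Implicit Defensive.
Import Order.TTheory GRing.Theory Num.Theory.
Local Open Scope classical_set_scope.
Local Open Scope ring_scope.

Section subgroup.
Context {X : zmodType} {K : set X}.
Hypothesis Ksub : is_subgroup K.

Lemma subgroupN x : K x -> K (- x).
Proof. by case: Ksub => K0 KB /(KB 0); rewrite sub0r; exact. Qed.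

Lemma subgroupD x y : K x -> K y -> K (x + y).
Proof. by move=> Kx /subgroupN Ky; rewrite -[y]opprK; exact: Ksub.2. Qed.

Lemma subgroupB x y : K x -> K y -> K (x - y).
Proof. exact: Ksub.2. Qed.

Lemma subgroupMn x n : K x -> K (x *+ n).
Proof.
move=> Kx; elim: n => [|n IHn]; first by rewrite mulr0n; exact: Ksub.1.
by rewrite mulrS; exact: subgroupD.
Qed.

End subgroup.

Lemma preimage_measurable d d' (T : measurableType d) (Y : measurableType d')
    (f : T -> Y) [A : set Y] :
  measurable_fun setT f -> measurable A -> measurable (f @^-1` A).
Proof. by move=> mf mA; rewrite -[_ @^-1` _]setTI; exact: mf. Qed.

Lemma measurable_fun_nat_select d d' (T : measurableType d) (Y : measurableType d')
    (alpha : T -> nat) (f : nat -> T -> Y) :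
  (forall S : set nat, measurable (alpha @^-1` S)) ->
  (forall n, measurable_fun setT (f n)) ->
  measurable_fun setT (fun t => f (alpha t) t).
Proof.
move=> malpha mf _ B mB; rewrite setTI.
have -> : (fun t => f (alpha t) t) @^-1` B =
    \bigcup_n (alpha @^-1` [set n] `&` f n @^-1` B).
  by apply/seteqP; split => [t Bt|t [n _ [/= -> //]]]; exists (alpha t).
by apply: bigcupT_measurable => n; apply: measurableI => //; exact: preimage_measurable.
Qed.

(* [X] with its Borel sets, pointed at [0] as measurable types must be. It keeps the
   topology of [X], so that [compact_cover], which needs a pointed space, applies. *)
Definition borel_type (X : topologicalZmodType) : Type := X.

Section borel_type.
Context {X : topologicalZmodType}.

HB.instance Definition _ := Topological.on (borel_type X).
HB.instance Definition _ := isPointed.Build (borel_type X) 0.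

Let borel_setC (A : set X) : borel A -> borel (~` A).
Proof. by move=> bA; rewrite -setTD; exact: sigma_algebraCD. Qed.

HB.instance Definition _ := @isMeasurable.Build default_measure_display
  (borel_type X) (@borel X) (@sigma_algebra0 _ setT _) borel_setC
  (@sigma_algebra_bigcup _ setT _).

Lemma open_borel [A : set X] : open A -> borel A.
Proof. exact: sub_sigma_algebra. Qed.

Lemma closed_borel [A : set X] : closed A -> borel A.
Proof.
move=> cA; rewrite -[A]setCK; apply: (@measurableC _ (borel_type X)).
by apply: open_borel; exact: closed_openC.
Qed.

End borel_type.

Lemma continuous_measurable_fun_borel (X Y : topologicalZmodType) (f : X -> Y) :
  continuous f -> measurable_fun setT (f : borel_type X -> borel_type Y).
Proof.
move=> cf; apply: (measurability (@open Y : set (set (borel_type Y)))) => // _ [A oA <-].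
rewrite setTI; apply: open_borel.
by apply: open_comp => // x _; exact: cf.
Qed.

Lemma open_prod_measurable (X Y : topologicalZmodType) (W : set (X * Y)) :
  @second_countable X -> @second_countable Y -> open W ->
  measurable (W : set (borel_type X * borel_type Y)).
Proof.
move=> [B1 cB1 [oB1 B1base]] [B2 cB2 [oB2 B2base]] oW.
pose boxes := [set AB : set X * set Y | (B1 `*` B2) AB /\ AB.1 `*` AB.2 `<=` W].
have -> : W = \bigcup_(AB in boxes) (AB.1 `*` AB.2).
  apply/seteqP; split => [z Wz|z [AB [_ ABW] /ABW//]].
  have [[A1 A2] [/= nA1 nA2] A12W] := open_nbhs_nbhs (conj oW Wz) : nbhs z W.
  have [V1 [B1V1 V1z] V1A1] := B1base z.1 A1 nA1.
  have [V2 [B2V2 V2z] V2A2] := B2base z.2 A2 nA2.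
  exists (V1, V2) => //; split => // -[a b] [/= /V1A1 ? /V2A2 ?].
  exact: A12W.
rewrite bigcup_set_type; apply: countable_bigcupT_measurable.
  rewrite (eq_countable (card_setT _)).
  apply: sub_countable (countableX cB1 cB2).
  by apply: subset_card_le => AB [].
move=> [[A1 A2] /set_mem [[/= B1A1 B2A2] _]].
by apply: measurableX; apply: open_borel; [exact: oB1 | exact: oB2].
Qed.

Lemma continuous2_measurable_fun_borel (X Y Z : topologicalZmodType) (f : X * Y -> Z) :
  @second_countable X -> @second_countable Y -> continuous f ->
  measurable_fun setT (f : borel_type X * borel_type Y -> borel_type Z).
Proof.
move=> scX scY cf.
apply: (measurability (@open Z : set (set (borel_type Z)))) => // _ [A oA <-].
rewrite setTI; apply: open_prod_measurable => //.
by apply: open_comp => // z _; exact: cf.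
Qed.

Section X_rv.
Context {d} {T : measurableType d} {X : topologicalZmodType}.
Implicit Types f g : T -> X.

Lemma X_rvP f : X_rv f <-> measurable_fun setT (f : T -> borel_type X).
Proof.
split => [rvf _ B mB|mf B bB]; first by rewrite setTI; exact: rvf.
exact: preimage_measurable mf bB.
Qed.

Hypothesis scX : @second_countable X.

Lemma X_rv_add f g : X_rv f -> X_rv g -> X_rv (fun t => f t + g t).
Proof.
move=> /X_rvP mf /X_rvP mg; apply/X_rvP.
change (measurable_fun setT
  ((fun p : borel_type X * borel_type X => (p.1 + p.2 : borel_type X))
   \o (fun t => (f t, g t)))).
apply: measurableT_comp; last exact: measurable_fun_pair.
exact: continuous2_measurable_fun_borel add_continuous.
Qed.

Lemma X_rv_mulrn f n : X_rv f -> X_rv (fun t => f t *+ n).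
Proof.
move=> rvf; elim: n => [|n IHn].
  by under eq_fun do rewrite mulr0n; apply/X_rvP; exact: measurable_cst.
by under eq_fun do rewrite mulrS; exact: X_rv_add.
Qed.

End X_rv.

Lemma X_rv_nat_select d (T : measurableType d) (X : topologicalZmodType)
    (alpha : T -> nat) (f : nat -> T -> X) :
  (forall S : set nat, measurable (alpha @^-1` S)) -> (forall n, X_rv (f n)) ->
  X_rv (fun t => f (alpha t) t).
Proof.
move=> malpha rvf; apply/X_rvP; apply: measurable_fun_nat_select => // n.
exact/X_rvP.
Qed.

Lemma borel_preimage_continuous (X Y : topologicalZmodType) (f : X -> Y) (B : set Y) :
  continuous f -> borel B -> borel (f @^-1` B).
Proof. by move=> cf; exact: preimage_measurable (continuous_measurable_fun_borel cf). Qed.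

Section topological_group.
Context {X : topologicalZmodType}.

Lemma translate_continuous (c : X) : continuous (fun x => x + c).
Proof.
move=> x; apply: (@continuous_comp _ _ _ (fun x => (x, c)) (fun p : X * X => p.1 + p.2)).
  by apply: cvg_pair; [exact: cvg_id | exact: cvg_cst].
exact: add_continuous.
Qed.

Lemma mulrn_continuous n : continuous (fun x : X => x *+ n).
Proof.
elim: n => [|n IHn] x; first by under eq_fun do rewrite mulr0n; exact: cvg_cst.
under eq_fun do rewrite mulrS.
apply: (@continuous_comp _ _ _ (fun x => (x, x *+ n)) (fun p : X * X => p.1 + p.2)).
  by apply: cvg_pair; [exact: cvg_id | exact: IHn].
exact: add_continuous.
Qed.
Arguments mulrn_continuous n.

Lemma translateE (c : X) (B : set X) :
  [set c + y | y in B] = (fun z => z - c) @^-1` B.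
Proof.
apply/seteqP; split => [_ [y By <-]|z Bz]; first by rewrite /= addrC addKr.
by exists (z - c) => //; rewrite addrC subrK.
Qed.

Lemma open_translate (c : X) (V : set X) : open V -> open [set c + y | y in V].
Proof.
by move=> oV; rewrite translateE; apply: open_comp => // x _; exact: translate_continuous.
Qed.

Lemma borel_translate (c : X) (B : set X) : borel B -> borel [set c + y | y in B].
Proof.
by rewrite translateE; exact: borel_preimage_continuous (translate_continuous (- c)).
Qed.

Lemma nbhs0_add_avoid [H : set X] [k : X] : closed H -> ~ H k ->
  exists2 V : set X, open V /\ V 0 & forall a b, V a -> V b -> ~ H (a + b + k).
Proof.
move=> cH Hk.
have : nbhs ((0, 0) : X * X) ((fun p : X * X => p.1 + p.2 + k) @^-1` ~` H).
  apply: open_nbhs_nbhs; split; last by rewrite /= !add0r.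
  apply: open_comp; last exact: closed_openC.
  move=> p _; apply: (@continuous_comp _ _ _ (fun p : X * X => p.1 + p.2) (fun x => x + k)).
    exact: add_continuous.
  exact: translate_continuous.
move=> [[A1 A2] [/= nA1 nA2] A12].
exists (interior (A1 `&` A2)); first by split; [exact: open_interior | exact: filterI].
move=> a b /interior_subset [A1a _] /interior_subset [_ A2b].
exact: A12 (a, b) (conj A1a A2b).
Qed.

End topological_group.

Section mpushforward.
Context d d' (T : measurableType d) (Y : measurableType d') (R : realType).
Variables (mu : {finite_measure set T -> \bar R}) (f : T -> Y).

(* [mf] is unused; it makes the measurability of [f] visible to instance inference. *)
Definition mpushforward (mf : measurable_fun setT f) := pushforward mu f.

Variable mf : measurable_fun setT f.

Let nu : {measure set Y -> \bar R}.
Proof. exact: pushforward mu f. Defined.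
HB.instance Definition _ := Measure.copy (mpushforward mf) nu.

Let mpushforward_fin : fin_num_fun (mpushforward mf).
Proof.
by move=> A mA; apply: fin_num_measure; rewrite -[_ @^-1` _]setTI; exact: mf.
Qed.

HB.instance Definition _ := Measure_isFinite.Build _ _ _ (mpushforward mf)
  mpushforward_fin.
End mpushforward.

Definition shift_invariant {R : realType} {X : topologicalZmodType} (K : set X)
    (mu : set X -> \bar R) : Prop :=
  forall x B, K x -> borel B -> mu [set x + y | y in B] = mu B.

Section convolution.
Context (R : realType) (X : topologicalZmodType) (scX : @second_countable X).
Variables (m1 m2 : {finite_measure set (borel_type X) -> \bar R}) (K : set X).
Hypotheses (mK : measurable (K : set (borel_type X))) (KN : forall x, K x -> K (- x)).
Hypotheses (m1K : m1 (~` K) = 0%E) (m2K : shift_invariant K m2).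

Lemma product_measure_add_preimage (B : set (borel_type X)) : measurable B ->
  (m1 \x m2)%E ((fun p : borel_type X * borel_type X => (p.1 + p.2 : borel_type X)) @^-1` B)
  = (m1 setT * m2 B)%E.
Proof.
set D := _ @^-1` B => mB.
have mD : measurable D.
  rewrite -[D]setTI; apply: continuous2_measurable_fun_borel => //.
  exact: add_continuous.
have mKC : measurable (~` K : set (borel_type X)) by exact: measurableC.
have mxD := measurable_fun_xsection m2 mD.
rewrite /product_measure1 -(setUv (K : set (borel_type X))) ge0_integral_setU //;
  last 2 first.
- by rewrite setUv.
- by rewrite /disj_set setICr.
rewrite [X in (_ + X)%E]null_set_integral //; last exact: measurable_funS mxD.
(* [measureU] returns [m1] as a content; fold it back so that [m1K] applies. *)
rewrite adde0 measureU ?setICr // -[X in (_ + X)%R]/(m1 (~` K)) m1K adde0.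
rewrite muleC -integral_cst //.
apply: eq_integral => w /set_mem Kw /=.
have -> : xsection D w = [set - w + y | y in B].
  apply/seteqP; split => [u|_ [y By <-]]; rewrite /xsection /D /= in_setE /=.
    by move=> Bwu; exists (w + u) => //; rewrite addKr.
  by rewrite addNKr.
exact: m2K (KN Kw) mB.
Qed.

End convolution.

Section independent_shift.
Context (R : realType) (X : topologicalZmodType) (scX : @second_countable X).
Context d (T : measurableType d) (P : probability T R).

Lemma law_add_independent_shift (K : set X) (G : set T) (W U : T -> X) :
  is_subgroup K -> borel K -> measurable G -> X_rv W -> X_rv U ->
  law P W K = 1%E -> shift_invariant K (law P U) ->
  (forall A B, borel A -> borel B ->
     P (W @^-1` A `&` U @^-1` B `&` G) = (P (W @^-1` A `&` G) * P (U @^-1` B))%E) ->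
  forall B, borel B -> P ((fun t => W t + U t) @^-1` B `&` G) = (law P U B * P G)%E.
Proof.
move=> Ksub bK mG rvW rvU WK Uinv indep B bB.
have /X_rvP mW := rvW.
have /X_rvP mU := rvU.
pose Q := mrestr P mG.
pose m1 := mpushforward Q mW.
pose m2 := mpushforward P mU.
have mWnK : measurable (W @^-1` ~` K) by rewrite preimage_setC; exact/measurableC/rvW.
have PWnK : P (W @^-1` ~` K) = 0%E.
  by rewrite preimage_setC probability_setC ?[P _]WK ?subee //; exact: rvW.
have m1K : m1 (~` K) = 0%E.
  exact: subset_measure0 (measurableI _ _ mWnK mG) mWnK (@subIsetl _ _ G) PWnK.
have := product_measure_add_preimage scX m1 m2 bK (subgroupN Ksub) m1K Uinv bB.
rewrite (@product_measure_unique _ _ _ _ _ m1 m2 (mpushforward Q (measurable_fun_pair mW mU)));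
  last first.
- rewrite -[_ @^-1` _]setTI; apply: continuous2_measurable_fun_borel => //.
  exact: add_continuous.
- by move=> A1 A2 mA1 mA2; exact: indep.
by rewrite /= /mpushforward /pushforward /mrestr preimage_setT setTI muleC.
Qed.

End independent_shift.

Lemma probability_eq1_subset d (T : measurableType d) (R : realType)
    (P : probability T R) (A B : set T) :
  measurable A -> measurable B -> A `<=` B -> P A = 1%E -> P B = 1%E.
Proof.
move=> mA mB AB PA; apply/eqP; rewrite eq_le probability_le1 //= -PA.
by apply: le_measure; rewrite ?in_setE.
Qed.

Section haar_laws.
Context (R : realType) (X : topologicalZmodType).
Context d (T : measurableType d) (P : probability T R).
Variable K : set X.
Hypotheses (Ksub : is_subgroup K) (bK : borel K).

Lemma corwin_haar_prob_mulr2n (U : T -> X) : corwin K -> X_rv U ->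
  haar_prob_of K (law P U) -> haar_prob_of K (law P (fun t => U t *+ 2)).
Proof.
have b2 B : borel B -> borel ((fun x : X => x *+ 2) @^-1` B).
  exact: borel_preimage_continuous (mulrn_continuous 2).
move=> corwinK rvU [UK Uinv]; split.
  apply: (@probability_eq1_subset _ _ _ P (U @^-1` K)) UK.
  - exact: rvU.
  - exact: rvU _ (b2 _ bK).
  - by move=> t /= Kt; exact: subgroupMn.
move=> x B Kx bB; have [y Ky <-] : [set y *+ 2 | y in K] x by rewrite corwinK.
rewrite /law.
have -> : (fun t => U t *+ 2) @^-1` [set y *+ 2 + z | z in B] =
    U @^-1` [set y + w | w in (fun x => x *+ 2) @^-1` B].
  apply/seteqP; split => t /= [w Bw tw].
    exists (U t - y); last by rewrite addrC subrK.
    by rewrite /= mulrnBl -tw addrAC subrr add0r.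
  by exists (w *+ 2) => //; rewrite -tw mulrnDl.
exact: Uinv (b2 _ bB).
Qed.

Lemma haar_prob_open_gt0 (U : T -> X) (V : set X) : compact K -> X_rv U ->
  haar_prob_of K (law P U) -> open V -> V 0 -> (0 < law P U V)%E.
Proof.
move=> cK rvU [UK Uinv] oV V0; rewrite lt0e measure_ge0 andbT.
apply/negP => /eqP UV0.
have [D DK KD] : finite_subset_cover K (fun x => [set x + y | y in V]) K.
  have : compact (K : set (borel_type X)) by [].
  rewrite compact_cover; apply.
  - by move=> x _; exact: open_translate.
  - by move=> x Kx; exists x => //; exists 0 => //; rewrite addr0.
have : (P (U @^-1` K) <= \sum_(x \in [set` D]) P (U @^-1` [set (x + y)%R | y in V]))%E.
  apply: content_sub_fsum (finite_fset D) _ (rvU _ bK) _.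
  - by move=> x _; apply: rvU; apply: borel_translate; exact: open_borel oV.
  - by move=> t /KD [x Dx Vt]; exists x.
rewrite [P _]UK fsbig1 ?lee_fin ?ler10 // => x /DK /set_mem Kx.
by rewrite [P _]Uinv //; exact: open_borel.
Qed.

Hypothesis scX : @second_countable X.

Lemma independent_haar_ident_distr (U1 U2 : T -> X) : X_rv U1 -> X_rv U2 ->
  haar_prob_of K (law P U1) -> haar_prob_of K (law P U2) ->
  (forall A B, borel A -> borel B ->
     P (U1 @^-1` A `&` U2 @^-1` B) = (law P U1 A * law P U2 B)%E) ->
  ident_distr P U1 U2.
Proof.
move=> rv1 rv2 [U1K U1inv] [U2K U2inv] indep B bB.
have indep12 A C : borel A -> borel C ->
    P (U1 @^-1` A `&` U2 @^-1` C `&` setT) = (P (U1 @^-1` A `&` setT) * P (U2 @^-1` C))%E.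
  by move=> bA bC; rewrite !setIT indep.
have indep21 A C : borel A -> borel C ->
    P (U2 @^-1` A `&` U1 @^-1` C `&` setT) = (P (U2 @^-1` A `&` setT) * P (U1 @^-1` C))%E.
  by move=> bA bC; rewrite !setIT setIC indep // muleC.
have := law_add_independent_shift scX setT Ksub bK measurableT rv1 rv2 U1K U2inv indep12 bB.
have := law_add_independent_shift scX setT Ksub bK measurableT rv2 rv1 U2K U1inv indep21 bB.
rewrite probability_setT !mule1 => <- <-.
by congr (P (_ `&` _)); apply/seteqP; split => t /=; rewrite addrC.
Qed.

End haar_laws.

Section four_variables.
Context (R : realType) (X : topologicalZmodType) (scX : @second_countable X).
Context d (T : measurableType d) (P : probability T R).
Variables (xi1 xi2 xi3 : T -> X) (alpha : T -> nat).
Hypotheses (rv1 : X_rv xi1) (rv2 : X_rv xi2) (rv3 : X_rv xi3).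
Hypothesis malpha : forall S : set nat, measurable (alpha @^-1` S).
Hypothesis indep : forall B1 B2 B3 (S : set nat), borel B1 -> borel B2 -> borel B3 ->
  P (xi1 @^-1` B1 `&` xi2 @^-1` B2 `&` xi3 @^-1` B3 `&` alpha @^-1` S)
  = (law P xi1 B1 * law P xi2 B2 * law P xi3 B3 * law P alpha S)%E.

Let Z t := xi3 t *+ (2 * alpha t).

Let rvZ : X_rv Z.
Proof. exact: X_rv_nat_select malpha (fun n => X_rv_mulrn scX _ rv3). Qed.

Let borelT : borel [set: X].
Proof. exact: (@measurableT _ (borel_type X)). Qed.

Lemma indep_xi1_xi2 A B : borel A -> borel B ->
  P (xi1 @^-1` A `&` xi2 @^-1` B) = (law P xi1 A * law P xi2 B)%E.
Proof.
move=> bA bB; have := indep setT bA bB borelT.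
by rewrite /law !preimage_setT !setIT probability_setT !mule1.
Qed.

Lemma indep_xi2_xi1Z A B C : borel A -> borel B -> borel C ->
  P (xi1 @^-1` A `&` xi2 @^-1` B `&` Z @^-1` C)
  = (P (xi1 @^-1` A `&` Z @^-1` C) * law P xi2 B)%E.
Proof.
move=> bA bB bC.
pose C_ n := (fun x : X => x *+ (2 * n)) @^-1` C.
have bC_ n : borel (C_ n) by exact: borel_preimage_continuous (mulrn_continuous _) bC.
pose E n := xi3 @^-1` C_ n `&` alpha @^-1` [set n].
have mE n : measurable (E n) by apply: measurableI => //; exact: rv3.
have -> : Z @^-1` C = \bigcup_n E n.
  apply/seteqP; split => [t Ct|t [n _ [/= Ct an]]]; first by exists (alpha t).
  by rewrite /preimage /= /Z an.
have tE : trivIset setT E by move=> i j _ _ [t [[_ ai] [_ aj]]]; rewrite -ai -aj.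
have mA := rv1 bA; have mB := rv2 bB.
rewrite !setI_bigcupr !measure_bigcup //=; last 4 first.
- by move=> n _; apply: measurableI.
- exact: trivIset_setIl.
- by move=> n _; apply: measurableI => //; exact: measurableI.
- exact: trivIset_setIl.
rewrite -(@fineK _ (law P xi2 B)) ?fin_num_measure // muleC.
rewrite -nneseriesZl; last by move=> n _; exact: measure_ge0.
apply: eq_eseriesr => n _; rewrite fineK ?fin_num_measure // /E !setIA.
have := indep [set n] bA borelT (bC_ n).
rewrite /law preimage_setT setIT probability_setT mule1 => ->.
by rewrite (indep _ bA bB (bC_ n)) /law -!muleA muleCA.
Qed.

Let Y t := xi1 t + xi2 t + Z t.

Let rvY : X_rv Y.
Proof. exact: (X_rv_add scX (X_rv_add scX rv1 rv2) rvZ). Qed.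

Variable K : set X.
Hypotheses (Ksub : is_subgroup K) (bK : borel K).
Hypotheses (haar1 : haar_prob_of K (law P xi1)) (haar2 : haar_prob_of K (law P xi2)).
Hypothesis xi3K : law P xi3 K = 1%E.

Lemma corwin_ident_distr : corwin K -> ident_distr P (fun t => xi1 t *+ 2) Y.
Proof.
move=> corwinK B bB.
have ZK : law P Z K = 1%E.
  apply: probability_eq1_subset xi3K; [exact: rv3 | exact: rvZ |].
  by move=> t /= Kt; exact: subgroupMn.
pose S t := Z t + xi2 t.
have rvS : X_rv S by exact: X_rv_add.
have S_xi1 A C : borel A -> borel C ->
    P (S @^-1` C `&` xi1 @^-1` A) = (law P xi2 C * P (xi1 @^-1` A))%E.
  move=> bA bC.
  apply: (law_add_independent_shift scX _ Ksub bK (rv1 bA) rvZ rv2 ZK haar2.2) => //.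
  move=> A' C' bA' bC'.
  by rewrite [in LHS]setIC setIA setIAC indep_xi2_xi1Z // [Z @^-1` _ `&` _]setIC.
have lawS C : borel C -> law P S C = law P xi2 C.
  move=> bC; have := S_xi1 setT C borelT bC.
  by rewrite preimage_setT setIT probability_setT mule1.
have haarS : haar_prob_of K (law P S).
  split; first by rewrite lawS // haar2.1.
  by move=> x C Kx bC; rewrite !lawS ?haar2.2 //; exact: borel_translate.
have xi1_S A C : borel A -> borel C ->
    P (xi1 @^-1` A `&` S @^-1` C `&` setT) = (P (xi1 @^-1` A `&` setT) * P (S @^-1` C))%E.
  by move=> bA bC; rewrite !setIT setIC S_xi1 // -lawS // muleC.
have := law_add_independent_shift scX setT Ksub bK measurableT rv1 rvS haar1.1 haarS.2 xi1_S bB.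
rewrite probability_setT mule1 setIT lawS // => xi1S.
have haar2xi1 := corwin_haar_prob_mulr2n Ksub bK corwinK rv1 haar1.
rewrite (independent_haar_ident_distr Ksub bK scX (X_rv_mulrn scX 2 rv1) rv2 haar2xi1 haar2)
  //; last first.
  move=> A C bA bC.
  exact: indep_xi1_xi2 (borel_preimage_continuous (mulrn_continuous 2) bA) bC.
have -> : Y = (fun t => xi1 t + S t) by apply/funext => t; rewrite /S addrA addrAC.
by rewrite -xi1S.
Qed.

Lemma ident_distr_double_mass1 (H := [set x *+ 2 | x in K]) :
  borel H -> ident_distr P (fun t => xi1 t *+ 2) Y -> law P Y H = 1%E.
Proof.
move=> bH xi1Y; rewrite -xi1Y //.
apply: (@probability_eq1_subset _ _ _ P (xi1 @^-1` K)) haar1.1.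
- exact: rv1.
- exact: rv1 _ (borel_preimage_continuous (mulrn_continuous 2) bH).
- by move=> t /= Kt; exists (xi1 t).
Qed.

Lemma ident_distr_corwin : hausdorff_space X -> compact K ->
  ident_distr P (fun t => xi1 t *+ 2) Y -> corwin K.
Proof.
move=> hX cK xi1Y; apply/seteqP; split => [_ [x Kx <-]|k Kk]; first exact: subgroupMn.
apply: contrapT => Hk; set H := [set x *+ 2 | x in K] in Hk.
have cH : closed H.
  apply: compact_closed hX (continuous_compact _ cK).
  exact/continuous_subspaceT/mulrn_continuous.
have [V [oV V0] VH] := nbhs0_add_avoid cH Hk.
have bV := open_borel oV.
pose E := xi1 @^-1` V `&` xi2 @^-1` [set k + y | y in V] `&` xi3 @^-1` K `&` alpha @^-1` setT.
have mE : measurable E.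
  apply: measurableI => //; apply: measurableI; first apply: measurableI.
  - exact: rv1.
  - exact: rv2 _ (borel_translate k bV).
  - exact: rv3.
have PE : P E = (law P xi1 V * law P xi2 V)%E.
  have -> : law P xi2 V = law P xi2 [set k + y | y in V] by exact: esym (haar2.2 k V Kk bV).
  rewrite indep //; last exact: borel_translate.
  by rewrite /law preimage_setT probability_setT (_ : P (xi3 @^-1` K) = 1%E) ?mule1.
have : (0 < P E)%E.
  rewrite PE mule_gt0 //.
  - exact: haar_prob_open_gt0 bK xi1 V cK rv1 haar1 oV V0.
  - exact: haar_prob_open_gt0 bK xi2 V cK rv2 haar2 oV V0.
have mYnH := rvY (measurableC (closed_borel cH : measurable (H : set (borel_type X)))).
have PYnH : P (Y @^-1` ~` H) = 0%E.
  rewrite preimage_setC probability_setC; last exact: rvY (closed_borel cH).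
  by rewrite [P _](ident_distr_double_mass1 (closed_borel cH) xi1Y) subee.
suff EYnH : E `<=` Y @^-1` ~` H by rewrite (subset_measure0 mE mYnH EYnH PYnH) ltxx.
move=> t [[[/= xi1V [b Vb kb]] Kxi3] _] [c Kc cY].
apply: VH xi1V Vb _.
exists (c - xi3 t *+ alpha t); first exact: subgroupB Ksub _ _ Kc (subgroupMn Ksub _ _ Kxi3).
by rewrite mulrnBl cY -mulrnA mulnC addrK -kb addrA addrAC.
Qed.

End four_variables.

Theorem proposition2p6
  (R : realType) (X : topologicalZmodType) (K : set X)
  (d : measure_display) (T : measurableType d) (P : probability T R)
  (xi1 xi2 xi3 : T -> X) (alpha : T -> nat) :
  second_countable_LCA X ->
  compact K -> is_subgroup K ->
  (* xi1, xi2, xi3 are random variables with distribution m_K *)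
  X_rv xi1 -> X_rv xi2 -> X_rv xi3 ->
  haar_prob_of K (law P xi1) ->
  haar_prob_of K (law P xi2) ->
  haar_prob_of K (law P xi3) ->
  (* alpha is Bernoulli on {0,1} with parameter 1/2 *)
  (forall S : set nat, measurable (alpha @^-1` S)) ->
  law P alpha [set 0%N] = (1 / 2)%:E ->
  law P alpha [set 1%N] = (1 / 2)%:E ->
  (* xi1, xi2, xi3, alpha are (mutually) independent *)
  (forall B1 B2 B3 (S : set nat), borel B1 -> borel B2 -> borel B3 ->
     P (xi1 @^-1` B1 `&` xi2 @^-1` B2 `&` xi3 @^-1` B3 `&` alpha @^-1` S)
     = (law P xi1 B1 * law P xi2 B2 * law P xi3 B3 * law P alpha S)%E) ->
  (ident_distr P (fun t => xi1 t *+ 2)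
                 (fun t => xi1 t + xi2 t + xi3 t *+ (2 * alpha t)%N)
   <-> corwin K).
Proof.
move=> [hX _ scX] cK Ksub rv1 rv2 rv3 haar1 haar2 [xi3K _] malpha _ _ indep.
have bK : borel K := closed_borel (compact_closed hX cK).
by split; [exact: ident_distr_corwin | exact: corwin_ident_distr].
Qed.
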